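(* Let $\rho_\mathrm{A}$ be a density matrix on $\mathbb C^4$ with eigenvalues $p_1\ge p_2\ge p_3\ge p_4$. Define $$C_4(\rho_\mathrm{A})=\sup\ \tfrac12\operatorname{tr}\big(\rho_\mathrm{A}\,[A_1(A_2+A_4)+A_3(A_2-A_4)]\big),$$ the supremum being over Hermitian operators $A_1,A_2,A_3,A_4$ on $\mathbb C^4$ with $A_k^2=I$ for all $k$ and $[A_1,A_2]=[A_1,A_4]=[A_3,A_2]=[A_3,A_4]=0$. Then $$C_4(\rho_\mathrm{A})=\max\Big\{1,\ \sqrt{2\big[(p_1-p_4)^2+(p_2-p_3)^2\big]}\Big\}.$$ *)

From HB Require Import structures.
From mathcomp Require Import all_boot all_order all_algebra.
From mathcomp Require Import complex.
From mathcomp Require Import boolp classical_sets reals.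

Set Implicit Arguments.
Unset Strict Implicit.
Unset Printing Implicit Defensive.

Import Order.TTheory GRing.Theory Num.Theory.
Local Open Scope ring_scope.
Local Open Scope classical_set_scope.

Definition adjmx (R : rcfType) (m n : nat) (M : 'M[R[i]]_(m, n)) : 'M[R[i]]_(n, m) :=
  map_mx (@conjc R) M^T.

Definition hermitian (R : rcfType) (n : nat) (M : 'M[R[i]]_n) : Prop :=
  adjmx M = M.

Definition density (R : rcfType) (n : nat) (rho : 'M[R[i]]_n) : Prop :=
  [/\ hermitian rho,
      (forall v : 'cV[R[i]]_n, 0 <= (adjmx v *m rho *m v) ord0 ord0)
    & \tr rho = 1].

Definition observable (R : rcfType) (n : nat) (A : 'M[R[i]]_n) : Prop :=
  hermitian A /\ A *m A = 1%:M.

Definition commute_mx (R : rcfType) (n : nat) (A B : 'M[R[i]]_n) : Prop :=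
  A *m B = B *m A.

(* (1/2) tr(rho [A1(A2+A4) + A3(A2-A4)])  (real part; the trace is real
   under the commutation hypotheses) *)
Definition chsh_value (R : rcfType) (n : nat) (rho A1 A2 A3 A4 : 'M[R[i]]_n) : R :=
  complex.Re (\tr (rho *m (A1 *m (A2 + A4) + A3 *m (A2 - A4)))) / 2.

Definition C4 (R : realType) (rho : 'M[R[i]]_4) : R :=
  sup [set x : R | exists A1 A2 A3 A4 : 'M[R[i]]_4,
         [/\ [/\ observable A1, observable A2, observable A3 & observable A4],
             [/\ commute_mx A1 A2, commute_mx A1 A4,
                 commute_mx A3 A2 & commute_mx A3 A4]
           & x = chsh_value rho A1 A2 A3 A4]].

(* Write rho = diag p in an orthonormal eigenbasis, and let
   B = A1 (A2 + A4) + A3 (A2 - A4), K = [A1, A3], L = [A4, A2].  The relations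
   A_k^2 = 1 and the four commutations give B^2 = 4 + K L, tr (K L) = 0 and
   K B = - B K.  The Hermitian matrix iK anticommutes with A1, so its spectrum is
   symmetric.  If iK is invertible, S = sign (iK) is a Hermitian involution
   anticommuting with B.  Otherwise, in dimension 4, the nonzero eigenvalues of iK
   are simple; the involution A2 commutes with iK and anticommutes with L, which
   forces L to vanish on those eigenvectors, hence K L = 0.
   If K L = 0 then B^2 = 4, so |B_ii| <= 2 and tr (rho B) / 2 <= 1.  If S exists,
   Cauchy-Schwarz for the trace form applied to X = D - S D S (D = diag p) gives
   2 tr (D B)^2 <= (tr D^2 - tr (D S D S)) tr B^2, where tr B^2 = 16 and
   tr (D S D S) = sum p_i p_j |S_ij|^2 >= 2 (p1 p4 + p2 p3) because (|S_ij|^2) is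
   doubly stochastic; thus tr (D B) / 2 <= sqrt (2 ((p1 - p4)^2 + (p2 - p3)^2)).
   Both bounds are attained: by A_k = 1, and by explicit observables making
   B = diag (2(x+y), 2(x-y), -2(x-y), -2(x+y)) for a suitable x^2 + y^2 = 1. *)

From Pilot Require Import Defs.
From mathcomp Require Import all_boot all_order fingroup perm.
From mathcomp Require Import ssralg ssrnum poly polydiv matrix mxpoly zmodp.
From mathcomp Require Import complex.
From mathcomp Require Import boolp classical_sets reals.
From mathcomp Require sesquilinear spectral.
From mathcomp Require Import ring lra.
From Stdlib Require Ncring Ncring_tac.

Set Implicit Arguments.
Unset Strict Implicit.
Unset Printing Implicit Defensive.

Import Order.TTheory GRing.Theory Num.Theory.
Local Open Scope ring_scope.

Definition anticommute_mx (R : rcfType) n (A B : 'M[R[i]]_n) := A *m B = - (B *m A).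

Lemma anticommute_mx_sym (R : rcfType) n (A B : 'M[R[i]]_n) :
  anticommute_mx A B -> anticommute_mx B A.
Proof. by rewrite /anticommute_mx => ->; rewrite opprK. Qed.

Definition commutator_mx (R : rcfType) n (A B : 'M[R[i]]_n) := A *m B - B *m A.

Definition bell_mx (R : rcfType) n (A1 A2 A3 A4 : 'M[R[i]]_n) :=
  A1 *m (A2 + A4) + A3 *m (A2 - A4).

Section Adjoint.
Variable R : rcfType.
Local Notation C := R[i].

Lemma adjmxK m n (M : 'M[C]_(m, n)) : adjmx (adjmx M) = M.
Proof. by apply/matrixP=> i j; rewrite !mxE conjcK. Qed.

Lemma adjmxM m n p (A : 'M[C]_(m, n)) (B : 'M[C]_(n, p)) :
  adjmx (A *m B) = adjmx B *m adjmx A.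
Proof. by rewrite /adjmx trmx_mul map_mxM. Qed.

Lemma adjmxD m n (A B : 'M[C]_(m, n)) : adjmx (A + B) = adjmx A + adjmx B.
Proof. by apply/matrixP=> i j; rewrite !mxE rmorphD. Qed.

Lemma adjmxN m n (A : 'M[C]_(m, n)) : adjmx (- A) = - adjmx A.
Proof. by apply/matrixP=> i j; rewrite !mxE rmorphN. Qed.

Lemma adjmxB m n (A B : 'M[C]_(m, n)) : adjmx (A - B) = adjmx A - adjmx B.
Proof. by rewrite adjmxD adjmxN. Qed.

Lemma adjmxZ m n a (A : 'M[C]_(m, n)) : adjmx (a *: A) = a^*%C *: adjmx A.
Proof. by apply/matrixP=> i j; rewrite !mxE rmorphM. Qed.

Lemma adjmx1 n : adjmx (1%:M : 'M[C]_n) = 1%:M.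
Proof.
by apply/matrixP=> i j; rewrite !mxE eq_sym; case: eqP; rewrite ?conjc1 ?conjc0.
Qed.

Definition unitary n (U : 'M[C]_n) := U *m adjmx U = 1%:M /\ adjmx U *m U = 1%:M.

Lemma unitary_adj n (U : 'M[C]_n) : unitary U -> unitary (adjmx U).
Proof. by move=> [UU' U'U]; split; rewrite adjmxK. Qed.

Definition uconj n (U X : 'M[C]_n) := adjmx U *m X *m U.

Section UnitaryConjugation.
Variables (n : nat) (U : 'M[C]_n).
Hypothesis uU : unitary U.

Lemma uconjM X Y : uconj U (X *m Y) = uconj U X *m uconj U Y.
Proof.
by rewrite /uconj !mulmxA -[_ *m U *m adjmx U]mulmxA uU.1 mulmx1.
Qed.

Lemma uconjD X Y : uconj U (X + Y) = uconj U X + uconj U Y.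
Proof. by rewrite /uconj mulmxDr mulmxDl. Qed.

Lemma uconjN X : uconj U (- X) = - uconj U X.
Proof. by rewrite /uconj mulmxN mulNmx. Qed.

Lemma uconj1 : uconj U 1%:M = 1%:M.
Proof. by rewrite /uconj mulmx1 uU.2. Qed.

Lemma uconjK X : uconj (adjmx U) (uconj U X) = X.
Proof. by rewrite /uconj adjmxK !mulmxA uU.1 mul1mx -mulmxA uU.1 mulmx1. Qed.

Lemma uconjKV X : uconj U (uconj (adjmx U) X) = X.
Proof. by rewrite /uconj adjmxK !mulmxA uU.2 mul1mx -mulmxA uU.2 mulmx1. Qed.

Lemma mxtrace_uconj X : \tr (uconj U X) = \tr X.
Proof. by rewrite /uconj mxtrace_mulC mulmxA uU.1 mul1mx. Qed.

Lemma adjmx_uconj X : adjmx (uconj U X) = uconj U (adjmx X).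
Proof. by rewrite /uconj !adjmxM adjmxK mulmxA. Qed.

Lemma hermitian_uconj X : hermitian X -> hermitian (uconj U X).
Proof. by rewrite /hermitian adjmx_uconj => ->. Qed.

Lemma observable_uconj A : observable A -> observable (uconj U A).
Proof.
by move=> [hA AA]; split; [exact: hermitian_uconj | rewrite -uconjM AA uconj1].
Qed.

Lemma commute_uconj A B : commute_mx A B -> commute_mx (uconj U A) (uconj U B).
Proof. by rewrite /commute_mx -!uconjM => ->. Qed.

Lemma anticommute_uconj A B :
  anticommute_mx A B -> anticommute_mx (uconj U A) (uconj U B).
Proof. by rewrite /anticommute_mx -!uconjM => ->; rewrite uconjN. Qed.

Lemma char_poly_uconj A : char_poly (uconj U A) = char_poly A.
Proof.
rewrite /char_poly /char_poly_mx /uconj; set f := map_mx (@polyC C).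
have -> : 'X%:M - f (adjmx U *m A *m U) = f (adjmx U) *m ('X%:M - f A) *m f U.
  rewrite /f !map_mxM mulmxBr mulmxBl; congr (_ - _).
  by rewrite scalar_mxC -mulmxA -map_mxM uU.2 map_mx1 mulmx1.
rewrite (det_mulmx (f (adjmx U) *m _)) det_mulmx mulrAC -det_mulmx.
by rewrite /f -map_mxM uU.2 map_mx1 det1 mul1r.
Qed.

End UnitaryConjugation.

Definition rdiag n (d : 'I_n -> R) : 'M[C]_n := diag_mx (\row_i (d i)%:C%C).

Lemma hermitian_rdiag n (d : 'I_n -> R) : hermitian (rdiag d).
Proof.
apply/matrixP=> i j; rewrite !mxE eq_sym.
by case: eqP => [->|]; rewrite ?mulr1n ?mulr0n ?conjc0 ?conjc_real.
Qed.

Lemma mul_rdiag_mx n (d : 'I_n -> R) (Y : 'M[C]_n) i j :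
  (rdiag d *m Y) i j = (d i)%:C%C * Y i j.
Proof. by rewrite mul_diag_mx !mxE. Qed.

Lemma mul_mx_rdiag n (d : 'I_n -> R) (Y : 'M[C]_n) i j :
  (Y *m rdiag d) i j = Y i j * (d j)%:C%C.
Proof. by rewrite mul_mx_diag !mxE. Qed.

Lemma mxtrace_rdiag_mul n (d : 'I_n -> R) (Y : 'M[C]_n) :
  \tr (rdiag d *m Y) = \sum_i (d i)%:C%C * Y i i.
Proof. by apply: eq_bigr => i _; rewrite mul_rdiag_mx. Qed.

Lemma mxtrace_rdiag n (d : 'I_n -> R) : \tr (rdiag d) = (\sum_i d i)%:C%C.
Proof.
by rewrite mxtrace_diag rmorph_sum; apply: eq_bigr => i _; rewrite mxE.
Qed.

End Adjoint.

Section Spectral.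
Variable R : rcfType.
Local Notation C := R[i].
Import sesquilinear spectral.

Lemma hermitian_rdiagonalizable n (A : 'M[C]_n) : Defs.hermitian A ->
  exists U (d : 'I_n -> R), unitary U /\ uconj U A = rdiag d.
Proof.
move=> hA; have hA' : A \is hermsymmx.
  by apply/is_hermitianmxP; rewrite expr0 scale1r; exact/esym.
have /orthomx_spectralP eA := hermitian_normalmx hA'.
have /mxOverP real_diag := hermitian_spectral_diag_real hA'.
set P := spectralmx A in eA; set sp := spectral_diag A in eA real_diag.
have PP' : P *m adjmx P = 1%:M by apply/unitarymxP/spectral_unitarymx.
have uP' : unitary (adjmx P) by split; rewrite adjmxK //; exact: mulmx1C.
exists (adjmx P), (fun i => complex.Re (sp 0 i)); split => //.
rewrite /uconj adjmxK eA invmx_unitary ?spectral_unitarymx // -/(adjmx P).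
rewrite !mulmxA PP' mul1mx -mulmxA PP' mulmx1; congr diag_mx.
by apply/rowP => i; rewrite mxE; have /complex_realP [k ->] := real_diag 0 i.
Qed.

End Spectral.

Section SortedSpectrum.
Variable R : rcfType.
Local Notation C := R[i].

Lemma uconj_col_perm n (W X : 'M[C]_n) (s : 'S_n) i j :
  uconj (col_perm s W) X i j = uconj W X (s i) (s j).
Proof.
rewrite !mxE; apply: eq_bigr => l _; rewrite !mxE; congr (_ * _).
by apply: eq_bigr => k _; rewrite !mxE.
Qed.

Lemma unitary_col_perm n (W : 'M[C]_n) (s : 'S_n) :
  unitary W -> unitary (col_perm s W).
Proof.
move=> [WW' W'W]; split; apply/matrixP => i j.
  rewrite -WW' !mxE [RHS](reindex_inj (@perm_inj _ s)) /=.
  by apply: eq_bigr => k _; rewrite !mxE.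
have := congr1 (fun M : 'M[C]_n => M (s i) (s j)) W'W.
rewrite /= !mxE (inj_eq (@perm_inj _ s)) => <-.
by apply: eq_bigr => k _; rewrite !mxE.
Qed.

Lemma hermitian_char_poly_rdiag n (A : 'M[C]_n) (p : 'I_n -> R) :
  hermitian A -> char_poly A = \prod_i ('X - ((p i)%:C)%C%:P) ->
  exists U, unitary U /\ uconj U A = rdiag p.
Proof.
move=> hA cpA; have [W [d [uW eW]]] := hermitian_rdiagonalizable hA.
pose td := [tuple (d i)%:C%C | i < n]; pose tp := [tuple (p i)%:C%C | i < n].
have cp_eq : \prod_(x <- tp) ('X - x%:P) = \prod_(x <- td) ('X - x%:P).
  rewrite !big_tuple; under eq_bigr do rewrite tnth_mktuple.
  under [RHS]eq_bigr do rewrite tnth_mktuple.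
  rewrite -cpA -(char_poly_uconj uW) eW.
  rewrite char_poly_trig ?diag_mx_is_trig //.
  by apply: eq_bigr => i _; rewrite !mxE eqxx mulr1n.
have /tuple_permP [s tp_s] := prod_XsubC_eq cp_eq.
have p_s i : p i = d (s i).
  apply: (@complexI R); have := congr1 (fun t => tnth t i) (val_inj tp_s).
  by rewrite !tnth_mktuple.
exists (col_perm s W); split; first exact: unitary_col_perm.
apply/matrixP => i j; rewrite uconj_col_perm eW !mxE (inj_eq (@perm_inj _ s)).
by rewrite p_s.
Qed.

End SortedSpectrum.

Module PzRingNcring.
Import Stdlib.setoid_ring.Ncring.

#[export] Instance pzRing_ops (T : pzRingType) :
  @Ring_ops T 0%R 1%R +%R *%R (fun x y => (x - y)%R) -%R eq := {}.

#[export] Instance pzRing_Ring (T : pzRingType) :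
  @Ring T 0%R 1%R +%R *%R (fun x y => (x - y)%R) -%R eq (pzRing_ops T).
Proof.
constructor; try exact: eq_equivalence; try by move=> *; exact: eq_refl.
all: try by move=> x y -> z w ->.
all: try by move=> x y ->.
- exact: add0r.
- exact: addrC.
- exact: addrA.
- exact: mul1r.
- exact: mulr1.
- exact: mulrA.
- exact: mulrDl.
- move=> x y z; exact: mulrDr.
- by [].
- exact: subrr.
Qed.
End PzRingNcring.
Import PzRingNcring.

Ltac nc_ring := Stdlib.setoid_ring.Ncring_tac.non_commutative_ring.

Section BellIdentities.
Variable T : pzRingType.
Variables a1 a2 a3 a4 : T.
Hypotheses (s1 : a1 * a1 = 1) (s2 : a2 * a2 = 1) (s3 : a3 * a3 = 1) (s4 : a4 * a4 = 1).
Hypotheses (c12 : a1 * a2 = a2 * a1) (c14 : a1 * a4 = a4 * a1).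
Hypotheses (c32 : a3 * a2 = a2 * a3) (c34 : a3 * a4 = a4 * a3).

Let k := a1 * a3 - a3 * a1.
Let l := a4 * a2 - a2 * a4.
Let b := a1 * (a2 + a4) + a3 * (a2 - a4).

(* Each identity below is proved as [lhs = rhs + z], where [z] is a non-commutative
   polynomial combination of the hypotheses written as [x = 0]. *)
Let z1 : a1 * a1 - 1 = 0. Proof. by rewrite s1 subrr. Qed.
Let z2 : a2 * a2 - 1 = 0. Proof. by rewrite s2 subrr. Qed.
Let z3 : a3 * a3 - 1 = 0. Proof. by rewrite s3 subrr. Qed.
Let z4 : a4 * a4 - 1 = 0. Proof. by rewrite s4 subrr. Qed.
Let z12 : a1 * a2 - a2 * a1 = 0. Proof. by rewrite c12 subrr. Qed.
Let z14 : a1 * a4 - a4 * a1 = 0. Proof. by rewrite c14 subrr. Qed.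
Let z32 : a3 * a2 - a2 * a3 = 0. Proof. by rewrite c32 subrr. Qed.
Let z34 : a3 * a4 - a4 * a3 = 0. Proof. by rewrite c34 subrr. Qed.

Ltac zsimp := do 3 rewrite ?z1 ?z2 ?z3 ?z4 ?z12 ?z14 ?z32 ?z34
  ?mul0r ?mulr0 ?addr0 ?add0r ?oppr0 ?subr0.

Lemma bell_anticomm_a1_k : a1 * k = - (k * a1).
Proof using s1 s2 s3 s4 c12 c14 c32 c34.
have -> : a1 * k = - (k * a1) + ((a1 * a1 - 1) * a3 - a3 * (a1 * a1 - 1)).
  by rewrite /k; nc_ring.
by zsimp.
Qed.

Let anticomm_a3_k : a3 * k = - (k * a3).
Proof.
have -> : a3 * k = - (k * a3) + (a1 * (a3 * a3 - 1) - (a3 * a3 - 1) * a1).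
  by rewrite /k; nc_ring.
by zsimp.
Qed.

Lemma bell_comm_a2_k : a2 * k = k * a2.
Proof using s1 s2 s3 s4 c12 c14 c32 c34.
have -> : a2 * k = k * a2 - (a1 * a2 - a2 * a1) * a3 - a1 * (a3 * a2 - a2 * a3)
                   + (a3 * a2 - a2 * a3) * a1 + a3 * (a1 * a2 - a2 * a1).
  by rewrite /k; nc_ring.
by zsimp.
Qed.

Let comm_a4_k : a4 * k = k * a4.
Proof.
have -> : a4 * k = k * a4 - (a1 * a4 - a4 * a1) * a3 - a1 * (a3 * a4 - a4 * a3)
                   + (a3 * a4 - a4 * a3) * a1 + a3 * (a1 * a4 - a4 * a1).
  by rewrite /k; nc_ring.
by zsimp.
Qed.

Lemma bell_anticomm_a2_l : a2 * l = - (l * a2).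
Proof using s1 s2 s3 s4 c12 c14 c32 c34.
have -> : a2 * l = - (l * a2) + (a4 * (a2 * a2 - 1) - (a2 * a2 - 1) * a4).
  by rewrite /l; nc_ring.
by zsimp.
Qed.

Lemma bell_comm_k_l : k * l = l * k.
Proof using s1 s2 s3 s4 c12 c14 c32 c34.
have e2 : a2 * k - k * a2 = 0 by rewrite bell_comm_a2_k subrr.
have e4 : a4 * k - k * a4 = 0 by rewrite comm_a4_k subrr.
have -> : k * l = l * k - a4 * (a2 * k - k * a2) - (a4 * k - k * a4) * a2
                  + a2 * (a4 * k - k * a4) + (a2 * k - k * a2) * a4.
  by rewrite /l; nc_ring.
by rewrite e2 e4; zsimp.
Qed.

Lemma bell_anticomm_k_b : k * b = - (b * k).
Proof using s1 s2 s3 s4 c12 c14 c32 c34.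
have e2 : a2 * k - k * a2 = 0 by rewrite bell_comm_a2_k subrr.
have e4 : a4 * k - k * a4 = 0 by rewrite comm_a4_k subrr.
have f1 : a1 * k + k * a1 = 0 by rewrite bell_anticomm_a1_k addNr.
have f3 : a3 * k + k * a3 = 0 by rewrite anticomm_a3_k addNr.
have -> : k * b = - (b * k) + (a1 * k + k * a1) * (a2 + a4)
    + a1 * ((a2 * k - k * a2) + (a4 * k - k * a4)) + (a3 * k + k * a3) * (a2 - a4)
    + a3 * ((a2 * k - k * a2) - (a4 * k - k * a4)).
  by rewrite /b; nc_ring.
by rewrite e2 e4 f1 f3; zsimp.
Qed.

Lemma bell_sqr : b * b = 1 + 1 + 1 + 1 + k * l.
Proof using s1 s2 s3 s4 c12 c14 c32 c34.
pose x := a2 + a4; pose y := a2 - a4.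
have p1 : a1 * x - x * a1 = 0 by rewrite /x mulrDr mulrDl c12 c14 subrr.
have p3 : a3 * x - x * a3 = 0 by rewrite /x mulrDr mulrDl c32 c34 subrr.
have q1 : a1 * y - y * a1 = 0 by rewrite /y mulrBr mulrBl c12 c14 subrr.
have q3 : a3 * y - y * a3 = 0 by rewrite /y mulrBr mulrBl c32 c34 subrr.
have -> : b * b = 1 + 1 + 1 + 1 + k * l
   + ((a1 * a1 - 1) * (x * x) - a1 * (a1 * x - x * a1) * x
      + (a3 * a3 - 1) * (y * y) - a3 * (a3 * y - y * a3) * y
      - a1 * (a3 * x - x * a3) * y - a3 * (a1 * y - y * a1) * x
      + (a2 * a2 - 1) + (a2 * a2 - 1) + (a4 * a4 - 1) + (a4 * a4 - 1)
      + (a1 * a3 + a3 * a1) * ((a2 * a2 - 1) - (a4 * a4 - 1))).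
  by rewrite /b /k /l /x /y; nc_ring.
by rewrite p1 p3 q1 q3; zsimp.
Qed.

Lemma bell_a2_kl_a2 : a2 * (k * l) * a2 = - (k * l).
Proof using s1 s2 s3 s4 c12 c14 c32 c34.
have e2 : a2 * k - k * a2 = 0 by rewrite bell_comm_a2_k subrr.
have f2 : a2 * l + l * a2 = 0 by rewrite bell_anticomm_a2_l addNr.
have -> : a2 * (k * l) * a2 = - (k * l) + (a2 * k - k * a2) * l * a2
    + k * (a2 * l + l * a2) * a2 - k * l * (a2 * a2 - 1).
  by nc_ring.
by rewrite e2 f2; zsimp.
Qed.

Lemma bell_rev : (a2 + a4) * a1 + (a2 - a4) * a3 = b.
Proof using s1 s2 s3 s4 c12 c14 c32 c34.
have -> : (a2 + a4) * a1 + (a2 - a4) * a3 = b - (a1 * a2 - a2 * a1)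
    - (a1 * a4 - a4 * a1) - (a3 * a2 - a2 * a3) + (a3 * a4 - a4 * a3).
  by rewrite /b; nc_ring.
by zsimp.
Qed.

End BellIdentities.

Lemma sum_ord4 (V : nmodType) (F : 'I_4 -> V) :
  \sum_i F i = F 0 + F 1 + F 2%:R + F 3%:R.
Proof.
rewrite !big_ord_recr big_ord0 /= add0r.
by congr (_ + _ + _ + _); congr F; apply: val_inj.
Qed.

Lemma prod_ord4 (T : pzSemiRingType) (F : 'I_4 -> T) :
  \prod_i F i = F 0 * F 1 * F 2%:R * F 3%:R.
Proof.
rewrite !big_ord_recr big_ord0 /= mul1r.
by congr (_ * _ * _ * _); congr F; apply: val_inj.
Qed.

Lemma sum_ord4_uniq (V : nmodType) (F : 'I_4 -> V) i j k l :
  uniq [:: i; j; k; l] -> \sum_x F x = F i + F j + F k + F l.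
Proof.
move=> ijkl; have [_ all_ijkl] := uniq_min_size ijkl (fun x _ => mem_enum predT x)
  (eq_leq (size_enum_ord 4)).
rewrite -big_enum /= (perm_big _ (uniq_perm (enum_uniq _) ijkl _)).
  by rewrite unlock /= addr0 !addrA.
by move=> x; rewrite all_ijkl.
Qed.

Lemma quadratic_ge0_discriminant (R : realFieldType) (a b c : R) : 0 <= a ->
  (forall t, 0 <= t ^+ 2 * a - 2 * t * b + c) -> b ^+ 2 <= a * c.
Proof.
move=> a_ge0 q_ge0; have [a0|a_neq0] := eqVneq a 0.
  have [b0|b_neq0] := eqVneq b 0; first by rewrite a0 b0 expr0n mul0r.
  have := q_ge0 ((c + 1) / (2 * b)); rewrite a0 mulr0 add0r.
  have -> : 2 * ((c + 1) / (2 * b)) * b = c + 1 by field; rewrite b_neq0.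
  lra.
have a_gt0 : 0 < a by rewrite lt_def a_neq0.
have := q_ge0 (b / a).
have -> : (b / a) ^+ 2 * a - 2 * (b / a) * b + c = c - b ^+ 2 / a by field.
by rewrite subr_ge0 ler_pdivrMr // mulrC.
Qed.

(* [p] is written through its gaps [p 0 - p 1], [p 1 - p 2], [p 2 - p 3]: the
   difference of the two sides is then a nonnegative combination of the [T i j]. *)
Lemma doubly_stochastic4_rearrangement (R : realDomainType) (p : 'I_4 -> R)
    (T : 'I_4 -> 'I_4 -> R) :
  p 1 <= p 0 -> p 2%:R <= p 1 -> p 3%:R <= p 2%:R -> (forall i j, 0 <= T i j) ->
  (forall i, \sum_j T i j = 1) -> (forall j, \sum_i T i j = 1) ->
  2 * (p 0 * p 3%:R + p 1 * p 2%:R) <= \sum_i p i * \sum_j p j * T i j.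
Proof.
move=> p10 p21 p32 T_ge0 rowT colT.
have := rowT 0; have := rowT 1; have := rowT 2%:R; have := rowT 3%:R.
have := colT 0; have := colT 1; have := colT 2%:R.
rewrite !sum_ord4 => c2 c1 c0 r3 r2 r1 r0.
set g0 := p 0 - p 1; set g1 := p 1 - p 2%:R; set g2 := p 2%:R - p 3%:R.
have [g0_ge0 g1_ge0 g2_ge0] : [/\ 0 <= g0, 0 <= g1 & 0 <= g2] by rewrite !subr_ge0.
rewrite -subr_ge0 (_ : _ - _ = g0 * g0 * T 0 0 + g0 * g1 * (T 0 0 + T 0 1)
  + g0 * g2 * (T 0 0 + T 0 1 + T 0 2%:R) + g1 * g0 * (T 0 0 + T 1 0)
  + g1 * g1 * (T 0 0 + T 0 1 + T 1 0 + T 1 1) + g1 * g2 * (T 2%:R 3%:R + T 3%:R 3%:R)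
  + g2 * g0 * (T 0 0 + T 1 0 + T 2%:R 0) + g2 * g1 * (T 3%:R 2%:R + T 3%:R 3%:R)
  + g2 * g2 * T 3%:R 3%:R).
  by clearbody g0 g1 g2; repeat (apply: addr_ge0 || apply: mulr_ge0).
have e03 : T 0 3%:R = 1 - T 0 0 - T 0 1 - T 0 2%:R by rewrite -r0; ring.
have e13 : T 1 3%:R = 1 - T 1 0 - T 1 1 - T 1 2%:R by rewrite -r1; ring.
have e23 : T 2%:R 3%:R = 1 - T 2%:R 0 - T 2%:R 1 - T 2%:R 2%:R by rewrite -r2; ring.
have e30 : T 3%:R 0 = 1 - T 0 0 - T 1 0 - T 2%:R 0 by rewrite -c0; ring.
have e31 : T 3%:R 1 = 1 - T 0 1 - T 1 1 - T 2%:R 1 by rewrite -c1; ring.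
have e32 : T 3%:R 2%:R = 1 - T 0 2%:R - T 1 2%:R - T 2%:R 2%:R by rewrite -c2; ring.
have e33 : T 3%:R 3%:R = 1 - T 3%:R 0 - T 3%:R 1 - T 3%:R 2%:R by rewrite -r3; ring.
by rewrite e33 e30 e31 e32 e03 e13 e23 /g0 /g1 /g2; ring.
Qed.

Section TraceInequalities.
Variable R : rcfType.
Local Notation C := R[i].
Local Notation Re := complex.Re.
Local Notation Im := complex.Im.

Lemma Re_realM (x : R) (z : C) : Re (x%:C%C * z) = x * Re z.
Proof. by case: z => u v; rewrite /= mul0r subr0. Qed.

Lemma Re_sum I (r : seq I) (P : pred I) (F : I -> C) :
  Re (\sum_(i <- r | P i) F i) = \sum_(i <- r | P i) Re (F i).
Proof. by rewrite raddf_sum. Qed.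

Definition sqnormc (z : C) : R := Re z ^+ 2 + Im z ^+ 2.

Lemma sqnormc_ge0 z : 0 <= sqnormc z.
Proof. by rewrite addr_ge0 ?sqr_ge0. Qed.

Lemma sqnormc_conj z : sqnormc z^*%C = sqnormc z.
Proof. by case: z => u v; rewrite /sqnormc /= sqrrN. Qed.

Lemma Re_mulcJ z : Re (z * z^*%C) = sqnormc z.
Proof. by case: z => u v; rewrite /sqnormc /= mulrN opprK !expr2. Qed.

Lemma Re_sqr_le_sqnormc z : Re z ^+ 2 <= sqnormc z.
Proof. by rewrite lerDl sqr_ge0. Qed.

Lemma hermitian_entry n (M : 'M[C]_n) i j : hermitian M -> M j i = (M i j)^*%C.
Proof. by move=> hM; rewrite -{1}hM !mxE. Qed.

Lemma Re_hermitian_sqr_diag n (M : 'M[C]_n) i : hermitian M ->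
  Re ((M *m M) i i) = \sum_j sqnormc (M i j).
Proof.
move=> hM; rewrite mxE Re_sum; apply: eq_bigr => j _.
by rewrite (hermitian_entry i j hM) Re_mulcJ.
Qed.

Lemma Re_tr_hermitian_sqr_ge0 n (M : 'M[C]_n) : hermitian M ->
  0 <= Re (\tr (M *m M)).
Proof.
move=> hM; rewrite Re_sum; apply: sumr_ge0 => i _.
by rewrite Re_hermitian_sqr_diag //; apply: sumr_ge0 => j _; exact: sqnormc_ge0.
Qed.

Lemma hermitian_involution_row n (S : 'M[C]_n) i :
  hermitian S -> S *m S = 1%:M -> \sum_j sqnormc (S i j) = 1.
Proof. by move=> hS SS; rewrite -Re_hermitian_sqr_diag // SS mxE eqxx. Qed.

Lemma hermitian_involution_col n (S : 'M[C]_n) j :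
  hermitian S -> S *m S = 1%:M -> \sum_i sqnormc (S i j) = 1.
Proof.
move=> hS SS; rewrite -(hermitian_involution_row j hS SS).
by apply: eq_bigr => i _; rewrite (hermitian_entry i j hS) sqnormc_conj.
Qed.

Lemma Re_tr_rdiag_mul n (p : 'I_n -> R) (M : 'M[C]_n) :
  Re (\tr (rdiag p *m M)) = \sum_i p i * Re (M i i).
Proof. by rewrite mxtrace_rdiag_mul Re_sum; apply: eq_bigr => i _; rewrite Re_realM. Qed.

Lemma Re_tr_rdiag_le_of_sqr4 n (p : 'I_n -> R) (B : 'M[C]_n) :
  (forall i, 0 <= p i) -> \sum_i p i = 1 -> hermitian B -> B *m B = 4%:R%:M ->
  Re (\tr (rdiag p *m B)) <= 2.
Proof.
move=> p_ge0 p_sum1 hB BB.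
have ReB_le2 i : Re (B i i) <= 2.
  have row_i : \sum_j sqnormc (B i j) = 4%:R.
    by rewrite -Re_hermitian_sqr_diag // BB mxE eqxx mulr1n raddfMn.
  have : Re (B i i) ^+ 2 <= 4%:R.
    apply: (le_trans (Re_sqr_le_sqnormc _)); rewrite -row_i (bigD1 i) //=.
    by rewrite lerDl sumr_ge0 // => j _; exact: sqnormc_ge0.
  by move: (Re (B i i)) => x; nra.
rewrite Re_tr_rdiag_mul; apply: (@le_trans _ _ (\sum_i p i * 2)).
- by apply: ler_sum => i _; exact: ler_wpM2l.
- by rewrite -mulr_suml p_sum1 mul1r.
Qed.

Lemma trace_cauchy_schwarz n (X B : 'M[C]_n) : hermitian X -> hermitian B ->
  Re (\tr (X *m B)) ^+ 2 <= Re (\tr (X *m X)) * Re (\tr (B *m B)).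
Proof.
move=> hX hB; apply: quadratic_ge0_discriminant; first exact: Re_tr_hermitian_sqr_ge0.
move=> t; have htXB : hermitian ((t%:C)%C *: X - B).
  by rewrite /hermitian adjmxB adjmxZ hX hB conjc_real.
have := Re_tr_hermitian_sqr_ge0 htXB.
rewrite mulmxBl !mulmxBr !raddfB /= -!scalemxAl -!scalemxAr !mxtraceZ.
by rewrite (mxtrace_mulC B X) !Re_realM; congr (_ <= _); ring.
Qed.

(* Cauchy-Schwarz applied to [X = D - S D S], which satisfies [tr (X B) = 2 tr (D B)]. *)
Lemma anticomm_trace_bound n (D B S : 'M[C]_n) :
  hermitian D -> hermitian B -> hermitian S -> S *m S = 1%:M -> anticommute_mx S B ->
  2 * Re (\tr (D *m B)) ^+ 2 <=
    (Re (\tr (D *m D)) - Re (\tr (D *m (S *m D *m S)))) * Re (\tr (B *m B)).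
Proof.
move=> hD hB hS SS SB; set X := D - S *m D *m S.
have hX : hermitian X by rewrite /hermitian /X adjmxB !adjmxM hD hS mulmxA.
have trSDSB : \tr (S *m D *m S *m B) = - \tr (D *m B).
  rewrite -mulmxA mxtrace_mulC SB mulNmx -mulmxA (mulmxA S S D) SS mul1mx.
  by rewrite raddfN /= mxtrace_mulC.
have trSDSSDS : \tr (S *m D *m S *m (S *m D *m S)) = \tr (D *m D).
  rewrite !mulmxA -(mulmxA _ S S) SS mulmx1 -mulmxA mxtrace_mulC.
  by rewrite -mulmxA (mulmxA S S) SS mul1mx.
have trXB : \tr (X *m B) = \tr (D *m B) *+ 2.
  by rewrite /X mulmxBl raddfB /= trSDSB opprK mulr2n.
have trXX : \tr (X *m X) = (\tr (D *m D) - \tr (D *m (S *m D *m S))) *+ 2.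
  rewrite /X mulmxBl !mulmxBr !raddfB /= trSDSSDS.
  by rewrite [\tr (S *m D *m S *m D)]mxtrace_mulC; ring.
have := trace_cauchy_schwarz hX hB.
rewrite trXB trXX !raddfMn raddfB /=.
set r := Re _; set a := (_ - _); set c := Re _.
by clearbody r a c; rewrite !mulr2n; nra.
Qed.

Lemma Re_tr_rdiag_sandwich n (p : 'I_n -> R) (S : 'M[C]_n) : hermitian S ->
  Re (\tr (rdiag p *m (S *m rdiag p *m S))) = \sum_i p i * \sum_j p j * sqnormc (S i j).
Proof.
move=> hS; rewrite Re_tr_rdiag_mul; apply: eq_bigr => i _; congr (_ * _).
rewrite mxE Re_sum; apply: eq_bigr => j _.
by rewrite mul_mx_rdiag (hermitian_entry i j hS) mulrAC mulrC Re_realM Re_mulcJ.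
Qed.

Lemma Re_tr_rdiag_sqr n (p : 'I_n -> R) :
  Re (\tr (rdiag p *m rdiag p)) = \sum_i p i ^+ 2.
Proof.
rewrite Re_tr_rdiag_mul; apply: eq_bigr => i _.
by rewrite !mxE eqxx mulr1n expr2.
Qed.

Lemma Re_tr_rdiag_le_of_anticomm4 (p : 'I_4 -> R) (B S : 'M[C]_4) :
  p 1 <= p 0 -> p 2%:R <= p 1 -> p 3%:R <= p 2%:R ->
  hermitian B -> hermitian S -> S *m S = 1%:M -> anticommute_mx S B ->
  Re (\tr (B *m B)) = 16%:R ->
  Re (\tr (rdiag p *m B)) / 2 <=
    Num.sqrt (2 * ((p 0 - p 3%:R) ^+ 2 + (p 1 - p 2%:R) ^+ 2)).
Proof.
move=> p10 p21 p32 hB hS SS SB trBB.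
have := anticomm_trace_bound (hermitian_rdiag p) hB hS SS SB.
rewrite Re_tr_rdiag_sqr Re_tr_rdiag_sandwich // sum_ord4 trBB.
have := doubly_stochastic4_rearrangement p10 p21 p32 (fun i j => sqnormc_ge0 (S i j))
  (fun i => hermitian_involution_row i hS SS)
  (fun j => hermitian_involution_col j hS SS).
set Z := \sum_i _; set r := Re _ => Z_ge r_bound.
have r2_le : (r / 2) ^+ 2 <= 2 * ((p 0 - p 3%:R) ^+ 2 + (p 1 - p 2%:R) ^+ 2) by nra.
apply: le_trans (ler_norm _) _; rewrite -sqrtr_sqr ler_sqrt //.
by rewrite mulr_ge0 // addr_ge0 // sqr_ge0.
Qed.

End TraceInequalities.

(* Otherwise the four values would be [v], [v], [-v] and [0], summing to [v]. *)
Lemma sym_spectrum4_simple (R : realDomainType) (h : 'I_4 -> R) :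
  (exists k, h k = 0) -> \sum_i h i = 0 -> (forall i, exists j, h j = - h i) ->
  forall i j, h i != 0 -> j != i -> h j != h i.
Proof.
move=> [k hk0] h_sum h_sym i j hi_neq0 ji; apply/eqP => hji; have [l hl] := h_sym i.
have neq x y : h x != h y -> x != y by apply: contraNneq => ->.
have hiN_neq : h i != - h i.
  by rewrite -addr_eq0 -mulr2n mulrn_eq0 negb_or hi_neq0.
have ijkl : uniq [:: i; j; k; l].
  rewrite /= !inE !negb_or (eq_sym i j) ji.
  by rewrite !neq ?hji ?hk0 ?hl // eq_sym oppr_eq0.
move: h_sum; rewrite (sum_ord4_uniq h ijkl) hji hk0 hl => h_sum.
by move: hi_neq0; rewrite (_ : h i = 0) ?eqxx //; lra.
Qed.

Section DiagonalCommutation.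
Variable R : rcfType.
Local Notation C := R[i].

Lemma anticommute_scale n a (A B : 'M[C]_n) :
  anticommute_mx A B -> anticommute_mx (a *: A) B.
Proof. by rewrite /anticommute_mx -scalemxAl -scalemxAr -scalerN => ->. Qed.

Lemma commute_scale n a (A B : 'M[C]_n) : commute_mx A B -> commute_mx (a *: A) B.
Proof. by rewrite /commute_mx -scalemxAl -scalemxAr => ->. Qed.

Lemma rdiag_anticomm_entry n (h : 'I_n -> R) (Y : 'M[C]_n) i j :
  anticommute_mx (rdiag h) Y -> h i + h j != 0 -> Y i j = 0.
Proof.
move=> /(congr1 (fun M : 'M[C]_n => M i j)).
rewrite mul_rdiag_mx mxE mul_mx_rdiag => e hij.
have /eqP : ((h i + h j)%:C)%C * Y i j = 0 by rewrite rmorphD mulrDl e mulrC addNr.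
by rewrite mulf_eq0 fmorph_eq0 (negbTE hij) => /eqP.
Qed.

Lemma rdiag_comm_entry n (h : 'I_n -> R) (Y : 'M[C]_n) i j :
  commute_mx (rdiag h) Y -> h i != h j -> Y i j = 0.
Proof.
move=> /(congr1 (fun M : 'M[C]_n => M i j)); rewrite mul_rdiag_mx mul_mx_rdiag => e hij.
have /eqP : ((h i - h j)%:C)%C * Y i j = 0 by rewrite rmorphB mulrBl e mulrC subrr.
by rewrite mulf_eq0 fmorph_eq0 subr_eq0 (negbTE hij) => /eqP.
Qed.

Lemma rdiag_anticomm_involution_sym n (h : 'I_n -> R) (Y : 'M[C]_n) :
  Y *m Y = 1%:M -> anticommute_mx (rdiag h) Y -> forall i, exists j, h j = - h i.
Proof.
move=> YY hY i.
have [/existsP [j /eqP hj] | /existsPn no_j] := boolP [exists j, h j == - h i].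
  by exists j.
have := congr1 (fun M : 'M[C]_n => M i i) YY; rewrite !mxE eqxx big1 => [/eqP|j _].
  by rewrite eq_sym oner_eq0.
rewrite (rdiag_anticomm_entry hY) ?mul0r //.
by apply: contra (no_j j); rewrite addrC addr_eq0.
Qed.

(* On a simple eigenvalue of [rdiag h] the commuting involution [Y] acts by a sign,
   which forces the anticommuting [Z] to vanish there. *)
Lemma rdiag_simple_comm_row n (h : 'I_n -> R) (Y Z : 'M[C]_n) i :
  (forall j, j != i -> h j != h i) -> Y *m Y = 1%:M -> anticommute_mx Y Z ->
  commute_mx (rdiag h) Y -> commute_mx (rdiag h) Z -> forall j, Z i j = 0.
Proof.
move=> simple YY YZ hY hZ j.
have [->|ji] := eqVneq j i; last first.
  by apply: (rdiag_comm_entry hZ); rewrite eq_sym simple.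
have Y_row l : l != i -> Y i l = 0.
  by move=> li; apply: (rdiag_comm_entry hY); rewrite eq_sym simple.
have Y_col l : l != i -> Y l i = 0.
  by move=> li; apply: (rdiag_comm_entry hY); rewrite simple.
have mul_ii (M N : 'M[C]_n) :
    (forall l, l != i -> M i l * N l i = 0) -> (M *m N) i i = M i i * N i i.
  by move=> MN0; rewrite mxE (bigD1 i) //= big1 ?addr0.
have Yii2 : Y i i * Y i i = 1.
  by rewrite -mul_ii ?YY ?mxE ?eqxx // => l /Y_row ->; rewrite mul0r.
have YZii : Y i i * Z i i = - (Z i i * Y i i).
  rewrite -mul_ii => [|l /Y_row ->]; last by rewrite mul0r.
  by rewrite YZ mxE mul_ii // => l /Y_col ->; rewrite mulr0.
have /eqP : (Y i i * Z i i) *+ 2 = 0 by rewrite mulr2n {2}YZii mulrC subrr.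
rewrite mulrn_eq0 /= mulf_eq0 => /orP [/eqP Yii0|/eqP //].
by move: Yii2; rewrite Yii0 mul0r => /eqP; rewrite eq_sym oner_eq0.
Qed.

Lemma rdiag4_singular_annihilate (h : 'I_4 -> R) (Y1 Y2 Z : 'M[C]_4) :
  (exists k, h k = 0) -> \sum_i h i = 0 -> Y1 *m Y1 = 1%:M -> Y2 *m Y2 = 1%:M ->
  anticommute_mx (rdiag h) Y1 -> commute_mx (rdiag h) Y2 -> commute_mx (rdiag h) Z ->
  anticommute_mx Y2 Z -> rdiag h *m Z = 0.
Proof.
move=> h0 h_sum Y1Y1 Y2Y2 hY1 hY2 hZ Y2Z.
have simple := sym_spectrum4_simple h0 h_sum (rdiag_anticomm_involution_sym Y1Y1 hY1).
apply/matrixP => i j; rewrite mul_rdiag_mx mxE.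
have [->|hi_neq0] := eqVneq (h i) 0; first by rewrite mul0r.
by rewrite (rdiag_simple_comm_row _ Y2Y2 Y2Z hY2 hZ) ?mulr0 // => l; exact: simple.
Qed.

Lemma rdiag_sg_anticomm n (h : 'I_n -> R) (Y : 'M[C]_n) :
  anticommute_mx (rdiag h) Y -> anticommute_mx (rdiag (fun i => Num.sg (h i))) Y.
Proof.
move=> hY; apply/matrixP => i j; rewrite mul_rdiag_mx mxE mul_mx_rdiag.
have [-> | Yij_neq0] := eqVneq (Y i j) 0; first by rewrite mulr0 mul0r oppr0.
have /eqP hij : h i + h j == 0.
  by apply: contraR Yij_neq0 => hij; apply/eqP; exact: rdiag_anticomm_entry hY hij.
have -> : h j = - h i by apply/eqP; rewrite -addr_eq0 addrC hij.
by rewrite sgrN rmorphN mulrN opprK mulrC.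
Qed.

Lemma rdiag_sg_involution n (h : 'I_n -> R) : (forall i, h i != 0) ->
  rdiag (fun i => Num.sg (h i)) *m rdiag (fun i => Num.sg (h i)) = 1%:M.
Proof.
move=> h_neq0; apply/matrixP => i j; rewrite mul_rdiag_mx !mxE.
have [->|_] := eqVneq i j; last by rewrite !mulr0n mulr0.
by rewrite !mulr1n -rmorphM -expr2 sqr_sg h_neq0.
Qed.

End DiagonalCommutation.

Section BellOperator.
Variables (R : rcfType) (n : nat) (A1 A2 A3 A4 : 'M[R[i]]_n).
Hypotheses (o1 : observable A1) (o2 : observable A2).
Hypotheses (o3 : observable A3) (o4 : observable A4).
Hypotheses (c12 : commute_mx A1 A2) (c14 : commute_mx A1 A4).
Hypotheses (c32 : commute_mx A3 A2) (c34 : commute_mx A3 A4).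

Local Notation B := (bell_mx A1 A2 A3 A4).
Local Notation K := (commutator_mx A1 A3).
Local Notation L := (commutator_mx A4 A2).

Let s1 : A1 *m A1 = 1%:M := o1.2.
Let s2 : A2 *m A2 = 1%:M := o2.2.
Let s3 : A3 *m A3 = 1%:M := o3.2.
Let s4 : A4 *m A4 = 1%:M := o4.2.

Lemma bell_mx_sqr : B *m B = 4%:R%:M + K *m L.
Proof.
apply: etrans (bell_sqr s1 s2 s3 s4 c12 c14 c32 c34) _; congr (_ + _).
by rewrite raddfMn /= !mulrS mulr0n addr0 !addrA.
Qed.

Lemma hermitian_bell_mx : hermitian B.
Proof.
rewrite /hermitian adjmxD !adjmxM adjmxD adjmxB o1.1 o2.1 o3.1 o4.1.
exact: bell_rev s1 s2 s3 s4 c12 c14 c32 c34.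
Qed.

Lemma mxtrace_commutator_mul : \tr (K *m L) = 0.
Proof.
have A2KLA2 : A2 *m (K *m L) *m A2 = - (K *m L).
  exact: bell_a2_kl_a2 s1 s2 s3 s4 c12 c14 c32 c34.
have : \tr (K *m L) = - \tr (K *m L).
  by rewrite -raddfN /= -A2KLA2 [RHS]mxtrace_mulC (mulmxA A2 A2) s2 mul1mx.
by move/eqP; rewrite -addr_eq0 -mulr2n mulrn_eq0 /= => /eqP.
Qed.

Lemma Re_tr_bell_mx_sqr : complex.Re (\tr (B *m B)) = (4 * n)%:R.
Proof.
rewrite bell_mx_sqr mxtraceD mxtrace_commutator_mul addr0 mxtrace_scalar.
by rewrite !raddfMn /= -mulrnA.
Qed.

Lemma hermitian_iK : hermitian ('i%C *: K).
Proof.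
have conj_i : ('i%C : R[i])^*%C = - 'i%C by apply/eqP; rewrite eq_complex /= oppr0 !eqxx.
by rewrite /hermitian adjmxZ adjmxB !adjmxM o1.1 o3.1 conj_i scaleNr -scalerN opprB.
Qed.

Lemma anticommute_iK_bell : anticommute_mx ('i%C *: K) B.
Proof. exact/anticommute_scale/(bell_anticomm_k_b s1 s2 s3 s4 c12 c14 c32 c34). Qed.

Lemma anticommute_iK_A1 : anticommute_mx ('i%C *: K) A1.
Proof.
apply/anticommute_scale/anticommute_mx_sym.
exact: bell_anticomm_a1_k s1 s2 s3 s4 c12 c14 c32 c34.
Qed.

Lemma commute_iK_A2 : commute_mx ('i%C *: K) A2.
Proof.
apply/commute_scale/esym.
exact: bell_comm_a2_k s1 s2 s3 s4 c12 c14 c32 c34.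
Qed.

Lemma commute_iK_L : commute_mx ('i%C *: K) L.
Proof. exact/commute_scale/(bell_comm_k_l s1 s2 s3 s4 c12 c14 c32 c34). Qed.

Lemma anticommute_A2_L : anticommute_mx A2 L.
Proof. exact: bell_anticomm_a2_l s1 s2 s3 s4 c12 c14 c32 c34. Qed.

End BellOperator.

Lemma bell_mx_dichotomy (R : rcfType) (A1 A2 A3 A4 : 'M[R[i]]_4) :
  observable A1 -> observable A2 -> observable A3 -> observable A4 ->
  commute_mx A1 A2 -> commute_mx A1 A4 -> commute_mx A3 A2 -> commute_mx A3 A4 ->
  commutator_mx A1 A3 *m commutator_mx A4 A2 = 0 \/
  exists S, [/\ hermitian S, S *m S = 1%:M & anticommute_mx S (bell_mx A1 A2 A3 A4)].
Proof.
move=> o1 o2 o3 o4 c12 c14 c32 c34.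
have KA1 := anticommute_iK_A1 o1 o2 o3 o4 c12 c14 c32 c34.
have KA2 := commute_iK_A2 o1 o2 o3 o4 c12 c14 c32 c34.
have KL := commute_iK_L o1 o2 o3 o4 c12 c14 c32 c34.
have A2L := anticommute_A2_L o1 o2 o3 o4 c12 c14 c32 c34.
have KB := anticommute_iK_bell o1 o2 o3 o4 c12 c14 c32 c34.
have [W [h [uW eW]]] := hermitian_rdiagonalizable (hermitian_iK o1 o3).
have [[k hk0]|h_neq0] : (exists k, h k = 0) \/ (forall i, h i != 0).
  have [/existsP [k /eqP hk0]|/existsPn h_neq0] := boolP [exists k, h k == 0].
    by left; exists k.
  by right.
- left; have h_sum : \sum_i h i = 0.
    have : \tr (rdiag h) = 0.
      by rewrite -eW mxtrace_uconj // mxtraceZ raddfB /= mxtrace_mulC subrr mulr0.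
    by rewrite mxtrace_rdiag => /eqP; rewrite fmorph_eq0 => /eqP.
  have sqr_uconj A : A *m A = 1%:M -> uconj W A *m uconj W A = 1%:M.
    by move=> AA; rewrite -uconjM // AA uconj1.
  move: (anticommute_uconj uW KA1) (commute_uconj uW KA2) (commute_uconj uW KL).
  rewrite eW => hA1 hA2 hL.
  have := rdiag4_singular_annihilate (ex_intro _ k hk0) h_sum (sqr_uconj _ o1.2)
    (sqr_uconj _ o2.2) hA1 hA2 hL (anticommute_uconj uW A2L).
  rewrite -eW -uconjM // => /(congr1 (uconj (adjmx W))); rewrite uconjK //.
  rewrite /uconj mulmx0 mul0mx -scalemxAl => /eqP; rewrite scaler_eq0 => /orP[|/eqP //].
  by rewrite eq_complex /= oner_eq0 andbF.
- right; have uW' := unitary_adj uW.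
  exists (uconj (adjmx W) (rdiag (fun i => Num.sg (h i)))); split.
  + exact/hermitian_uconj/hermitian_rdiag.
  + by rewrite -uconjM // rdiag_sg_involution // uconj1.
  + rewrite -[bell_mx _ _ _ _](uconjK uW); apply: (anticommute_uconj uW').
    by apply: rdiag_sg_anticomm; rewrite -eW; exact: anticommute_uconj.
Qed.

Section OptimalObservables.
Variables (R : rcfType) (x y : R).
Local Notation C := R[i].
Let cx : C := x%:C%C.
Let cy : C := y%:C%C.

Definition mx4_of_seq (l : seq (seq C)) : 'M[C]_4 :=
  \matrix_(i, j) nth 0 (nth [::] l i) j.

(* With the Pauli matrices σx, σz: A1 = 1 ⊗ σx, A3 = σx ⊗ σz and
   A2, A4 = x σz ⊗ σx ± y σx ⊗ 1, so that B = 2x σz ⊗ 1 + 2y 1 ⊗ σz. *)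

Definition optimal_A1 := mx4_of_seq
  [:: [:: 0; 1; 0; 0]; [:: 1; 0; 0; 0]; [:: 0; 0; 0; 1]; [:: 0; 0; 1; 0]].
Definition optimal_A3 := mx4_of_seq
  [:: [:: 0; 0; 1; 0]; [:: 0; 0; 0; -1]; [:: 1; 0; 0; 0]; [:: 0; -1; 0; 0]].
Definition optimal_A2 := mx4_of_seq
  [:: [:: 0; cx; cy; 0]; [:: cx; 0; 0; cy]; [:: cy; 0; 0; - cx]; [:: 0; cy; - cx; 0]].
Definition optimal_A4 := mx4_of_seq
  [:: [:: 0; cx; - cy; 0]; [:: cx; 0; 0; - cy];
      [:: - cy; 0; 0; - cx]; [:: 0; - cy; - cx; 0]].

Ltac entrywise4 := apply/matrixP; intros i j; rewrite !mxE ?sum_ord4 ?mxE;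
  revert i j; case=> [[|[|[|[|//]]]] ?]; case=> [[|[|[|[|//]]]] ?] /=.

Ltac hermitian4 := entrywise4; apply/eqP; rewrite eq_complex /= ?oppr0 ?opprK ?eqxx.

Lemma observable_optimal_A1 : observable optimal_A1.
Proof. by split; [hermitian4 | entrywise4; ring]. Qed.

Lemma observable_optimal_A3 : observable optimal_A3.
Proof. by split; [hermitian4 | entrywise4; ring]. Qed.

Hypothesis xy1 : x ^+ 2 + y ^+ 2 = 1.

Let cxy1 : cx * cx + cy * cy = 1.
Proof. by rewrite -!rmorphM -rmorphD -!expr2 xy1. Qed.

Lemma observable_optimal_A2 : observable optimal_A2.
Proof. by split; [hermitian4 | rewrite -cxy1; entrywise4; ring]. Qed.

Lemma observable_optimal_A4 : observable optimal_A4.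
Proof. by split; [hermitian4 | rewrite -cxy1; entrywise4; ring]. Qed.

Lemma commute_optimal :
  [/\ commute_mx optimal_A1 optimal_A2, commute_mx optimal_A1 optimal_A4,
      commute_mx optimal_A3 optimal_A2 & commute_mx optimal_A3 optimal_A4].
Proof. by split; entrywise4; ring. Qed.

Lemma bell_mx_optimal :
  bell_mx optimal_A1 optimal_A2 optimal_A3 optimal_A4 =
  rdiag (tnth [tuple 2 * (x + y); 2 * (x - y); - (2 * (x - y)); - (2 * (x + y))]).
Proof.
by entrywise4; rewrite /cx /cy ?rmorphN ?rmorphM ?rmorphD ?rmorphB ?rmorph_nat; ring.
Qed.

End OptimalObservables.

Definition chsh_values (R : rcfType) n (rho : 'M[R[i]]_n) : set R :=
  [set x : R | exists A1 A2 A3 A4 : 'M[R[i]]_n,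
     [/\ [/\ observable A1, observable A2, observable A3 & observable A4],
         [/\ commute_mx A1 A2, commute_mx A1 A4, commute_mx A3 A2 & commute_mx A3 A4]
       & x = chsh_value rho A1 A2 A3 A4]].

Lemma sup_eq_max (R : realType) (E : set R) m : E m -> ubound E m -> sup E = m.
Proof.
move=> Em ubm; apply/le_anti/andP; split; first by apply: ge_sup => //; exists m.
by apply: ub_le_sup => //; exists m.
Qed.

Section CHSHValues.
Variable R : rcfType.
Local Notation C := R[i].

Lemma density_rdiag n (rho U : 'M[C]_n) (p : 'I_n -> R) : density rho -> unitary U ->
  uconj U rho = rdiag p -> (forall i, 0 <= p i) /\ \sum_i p i = 1.
Proof.
move=> [_ rho_ge0 tr_rho] uU eU; split=> [i|].
  have := rho_ge0 (col i U).
  have -> : (adjmx (col i U) *m rho *m col i U) 0 0 = uconj U rho i i.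
    rewrite !mxE; apply: eq_bigr => k _; rewrite !mxE; congr (_ * _).
    by apply: eq_bigr => l _; rewrite !mxE.
  by rewrite eU !mxE eqxx mulr1n ler0c.
apply: (@complexI R); rewrite -mxtrace_rdiag -eU mxtrace_uconj //.
Qed.

Lemma chsh_value_uconj n (U rho A1 A2 A3 A4 : 'M[C]_n) : unitary U ->
  chsh_value rho A1 A2 A3 A4 = complex.Re (\tr (uconj U rho *m
    bell_mx (uconj U A1) (uconj U A2) (uconj U A3) (uconj U A4))) / 2.
Proof.
move=> uU; rewrite /chsh_value -(mxtrace_uconj uU) (uconjM uU rho) uconjD.
by rewrite (uconjM uU A1) (uconjM uU A3) !uconjD uconjN.
Qed.

Lemma chsh_values_ub (rho U : 'M[C]_4) (p : 'I_4 -> R) :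
  unitary U -> uconj U rho = rdiag p ->
  p 1 <= p 0 -> p 2%:R <= p 1 -> p 3%:R <= p 2%:R ->
  (forall i, 0 <= p i) -> \sum_i p i = 1 ->
  ubound (chsh_values rho)
    (Num.max 1 (Num.sqrt (2 * ((p 0 - p 3%:R) ^+ 2 + (p 1 - p 2%:R) ^+ 2)))).
Proof.
move=> uU eU p10 p21 p32 p_ge0 p_sum _ [A1 [A2 [A3 [A4 [[o1 o2 o3 o4] cs ->]]]]].
case: cs => /(commute_uconj uU) c12 /(commute_uconj uU) c14.
move=> /(commute_uconj uU) c32 /(commute_uconj uU) c34.
move: o1 o2 o3 o4 => /(observable_uconj uU) o1 /(observable_uconj uU) o2.
move=> /(observable_uconj uU) o3 /(observable_uconj uU) o4.
have hB := hermitian_bell_mx o1 o2 o3 o4 c12 c14 c32 c34.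
rewrite (chsh_value_uconj _ _ _ _ _ uU) eU le_max.
case: (bell_mx_dichotomy o1 o2 o3 o4 c12 c14 c32 c34) => [KL0|[S [hS SS SB]]].
- have BB : bell_mx (uconj U A1) (uconj U A2) (uconj U A3) (uconj U A4) *m
            bell_mx (uconj U A1) (uconj U A2) (uconj U A3) (uconj U A4) = 4%:R%:M.
    by rewrite bell_mx_sqr // KL0 addr0.
  by rewrite ler_pdivrMr // mul1r (Re_tr_rdiag_le_of_sqr4 p_ge0 p_sum hB BB).
- apply/orP; right; apply: (Re_tr_rdiag_le_of_anticomm4 p10 p21 p32 hB hS SS SB).
  exact: Re_tr_bell_mx_sqr o1 o2 o3 o4 c12 c14 c32 c34.
Qed.

Lemma chsh_values1 n (rho : 'M[C]_n) : \tr rho = 1 -> chsh_values rho 1.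
Proof.
have o1 : observable (1%:M : 'M[C]_n) by split; [exact: adjmx1 | exact: mul1mx].
move=> tr_rho; exists 1%:M, 1%:M, 1%:M, 1%:M; split => //.
rewrite /chsh_value subrr mulmx0 addr0 mul1mx mulmxDr mulmx1 mxtraceD tr_rho.
by rewrite raddfD /=; field.
Qed.

Lemma chsh_values_optimal (rho U : 'M[C]_4) (p : 'I_4 -> R) (x y : R) :
  unitary U -> uconj U rho = rdiag p -> x ^+ 2 + y ^+ 2 = 1 ->
  chsh_values rho ((x + y) * (p 0 - p 3%:R) + (x - y) * (p 1 - p 2%:R)).
Proof.
move=> uU eU xy1; have uU' := unitary_adj uU.
have [c12 c14 c32 c34] := commute_optimal x y.
exists (uconj (adjmx U) (optimal_A1 R)), (uconj (adjmx U) (optimal_A2 x y)),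
  (uconj (adjmx U) (optimal_A3 R)), (uconj (adjmx U) (optimal_A4 x y)); split.
- split; apply: observable_uconj => //.
  + exact: observable_optimal_A1.
  + exact: observable_optimal_A2.
  + exact: observable_optimal_A3.
  + exact: observable_optimal_A4.
- by split; apply: commute_uconj.
rewrite (chsh_value_uconj _ _ _ _ _ uU) eU !uconjKV // bell_mx_optimal.
rewrite Re_tr_rdiag_mul sum_ord4 !mxE !eqxx !mulr1n !(tnth_nth 0) /=.
by field.
Qed.

End CHSHValues.

(* The witness is [(x + y, x - y) = sqrt 2 (a, b) / |(a, b)|]. *)
Lemma exists_unit_bell_angle (R : rcfType) (a b : R) : 0 < a ^+ 2 + b ^+ 2 ->
  exists x y : R, x ^+ 2 + y ^+ 2 = 1 /\
    (x + y) * a + (x - y) * b = Num.sqrt (2 * (a ^+ 2 + b ^+ 2)).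
Proof.
move=> hQ; set Q := a ^+ 2 + b ^+ 2 in hQ *.
set nu := Num.sqrt Q; set s2 := Num.sqrt (2 : R).
have nu2 : nu ^+ 2 = Q by rewrite sqr_sqrtr // ltW.
have s22 : s2 ^+ 2 = 2 by rewrite sqr_sqrtr.
have nu_neq0 : nu != 0 by rewrite gt_eqF // sqrtr_gt0.
exists (s2 * (a + b) / (2 * nu)), (s2 * (a - b) / (2 * nu)); split.
  have -> : (s2 * (a + b) / (2 * nu)) ^+ 2 + (s2 * (a - b) / (2 * nu)) ^+ 2
          = s2 ^+ 2 * (a ^+ 2 + b ^+ 2) / (2 * nu ^+ 2) by field.
  by rewrite s22 nu2 -/Q; field; rewrite lt0r_neq0.
rewrite sqrtrM // -/s2 -/nu.
have -> : (s2 * (a + b) / (2 * nu) + s2 * (a - b) / (2 * nu)) * a +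
    (s2 * (a + b) / (2 * nu) - s2 * (a - b) / (2 * nu)) * b
    = s2 * (a ^+ 2 + b ^+ 2) / nu by field.
by rewrite -/Q -nu2; field.
Qed.

Theorem mainTheorem7 (R : realType) (rho : 'M[R[i]]_4) (p1 p2 p3 p4 : R) :
  density rho ->
  char_poly rho = ('X - (p1%:C)%C%:P) * ('X - (p2%:C)%C%:P)
                  * ('X - (p3%:C)%C%:P) * ('X - (p4%:C)%C%:P) ->
  p1 >= p2 -> p2 >= p3 -> p3 >= p4 ->
  C4 rho = Num.max 1 (Num.sqrt (2 * ((p1 - p4) ^+ 2 + (p2 - p3) ^+ 2))).
Proof.
move=> hrho cp p21 p32 p43; pose p := tnth [tuple p1; p2; p3; p4].
have [U [uU eU]] : exists U, unitary U /\ uconj U rho = rdiag p.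
  by apply: hermitian_char_poly_rdiag; [case: hrho | rewrite prod_ord4 cp].
have [p_ge0 p_sum] := density_rdiag hrho uU eU.
rewrite /C4 -/(chsh_values rho); apply: sup_eq_max.
  2: exact: chsh_values_ub uU eU p21 p32 p43 p_ge0 p_sum.
have [_|gt_sqrt1] := lerP (Num.sqrt (2 * ((p1 - p4) ^+ 2 + (p2 - p3) ^+ 2))) 1.
  by apply: chsh_values1; case: hrho.
have [|x [y [xy1 <-]]] := @exists_unit_bell_angle R (p1 - p4) (p2 - p3).
  rewrite lt_def addr_ge0 ?sqr_ge0 // andbT; apply: contraTneq gt_sqrt1 => ->.
  by rewrite mulr0 sqrtr0 ltr10.
exact: chsh_values_optimal uU eU xy1.
Qed.
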